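(* Let $n\in\mathbb{N}$ and for $t\geq 1$ let $$f_n(t)=\sum_{j=0}^{n-1}\binom{n-1}{j}\left(\binom{n}{j+1}t^{2j+1}-\binom{n}{j}t^{2j}\right).$$ Then $f_n^{(i)}(t)\geq 0$ for all $t\geq 1$ and all $i=0,1,\dots,2n-1$.
   Context: $f_n^{(i)}$ denotes the $i$-th derivative of the polynomial $f_n$ (with $f_n^{(0)}=f_n$). *)

From mathcomp Require Import all_boot all_order all_algebra.
Set Implicit Arguments. Unset Strict Implicit. Unset Printing Implicit Defensive.
Import Order.TTheory GRing.Theory Num.Theory.
Local Open Scope ring_scope.

Definition fpoly (R : nzRingType) (n : nat) : {poly R} :=
  \sum_(j < n) ('C(n.-1, j))%:R *:
     (('C(n, j.+1))%:R *: 'X^((2 * j).+1)%N - ('C(n, j))%:R *: 'X^((2 * j)%N)).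

(* Put s := t - 1 and write Cat_k for the Catalan numbers. Then
     f_{m+1}(t) = s * sum_{k=0}^m C(m, k) Cat_k s^(2(m-k)) t^k,
   which, as a polynomial in s (with t = s + 1), has nonnegative coefficients;
   hence every derivative is nonnegative for s >= 0, i.e. for t >= 1.
   The factorisation comes from computing [Y^m] + [Y^(m+1)] of
   Q = (1 - tY)^m (Y - t)^(m+1) in two ways. Expanding both binomials directly
   gives -f_{m+1}(t). Writing instead (1 - tY)(Y - t) = s^2 Y - t (1 - Y)^2 and
   Y - t = -((1 - Y) + s), the k-th term of the expansion contributes two
   differences of adjacent binomial coefficients of (1 - Y)^(2k+1) and
   (1 - Y)^(2k): the first vanishes by symmetry, the second is +-Cat_k. *)

From mathcomp Require Import all_boot all_order all_algebra.
From mathcomp Require Import ring zify.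
Import Order.TTheory GRing.Theory Num.Theory.
Local Open Scope ring_scope.

Lemma linear_polyXn (S : comNzRingType) (a b : S) N :
  (a%:P + b%:P * 'X) ^+ N = \poly_(l < N.+1) (a ^+ (N - l) * b ^+ l *+ 'C(N, l)).
Proof.
rewrite exprDn poly_def; apply: eq_bigr => l _.
by rewrite exprMn -!polyC_exp mulrA -polyCM mul_polyC scalerMnl.
Qed.

Lemma coef_linear_polyXn (S : comNzRingType) (a b : S) N l :
  ((a%:P + b%:P * 'X) ^+ N)`_l = a ^+ (N - l) * b ^+ l *+ 'C(N, l).
Proof.
rewrite linear_polyXn coef_poly; case: ltnP => // hl.
by rewrite bin_small // mulr0n.
Qed.

Lemma derivn_comp_XsubC (R : comNzRingType) (p : {poly R}) c k :
  (p \Po ('X - c%:P))^`(k) = p^`(k) \Po ('X - c%:P).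
Proof.
elim: k => [|k IHk]; first by rewrite !derivn0.
by rewrite !derivnS IHk deriv_comp derivXsubC mulr1.
Qed.

(* Stated with the predicate Num.Def.nneg_num_pred rather than the qualifier
   Num.nneg, for which the closure instances of polyOver are not found. *)
Lemma horner_derivn_comp_XsubC_ge0 (R : numDomainType) (p : {poly R}) c x k :
  p \is a polyOver Num.Def.nneg_num_pred -> c <= x ->
  0 <= ((p \Po ('X - c%:P))^`(k)).[x].
Proof.
move=> p_nneg le_cx; rewrite derivn_comp_XsubC horner_comp hornerXsubC.
by apply: (rpred_horner (polyOver_derivn p_nneg k)); rewrite -topredE /= subr_ge0.
Qed.

Definition catalan k := ('C(k.*2, k) - 'C(k.*2, k.+1))%N.

Lemma leq_bin_middle k : ('C(k.*2, k.+1) <= 'C(k.*2, k))%N.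
Proof.
rewrite -(@leq_pmul2l k.+1) // mul_bin_left -addnn addnK.
by rewrite leq_mul2r leqnSn orbT.
Qed.

Lemma natr_catalan (R : pzRingType) k :
  (catalan k)%:R = 'C(k.*2, k)%:R - 'C(k.*2, k.+1)%:R :> R.
Proof. by rewrite natrB ?leq_bin_middle. Qed.

Definition catalan_sum {S : nzSemiRingType} m (s t : S) : S :=
  \sum_(k < m.+1) s ^+ (2 * (m - k)) * t ^+ k *+ ('C(m, k) * catalan k).

Section Factorisation.
Variables (R : comNzRingType) (m : nat).
Local Notation t := ('X : {poly R}).
Local Notation s := (t - 1).
(* The variable Y is the outer 'X of {poly {poly R}}. *)

Let A : {poly {poly R}} := 1%:P + (- t)%:P * 'X.
Let B : {poly {poly R}} := (- t)%:P + 1%:P * 'X.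
Let W : {poly {poly R}} := 1%:P + (-1)%:P * 'X.
Let Q := A ^+ m * B ^+ m.+1.

Let coefs_Q_fpoly : Q`_m + Q`_m.+1 = - fpoly R m.+1.
Proof.
have coefA l : (A ^+ m)`_l = (- t) ^+ l *+ 'C(m, l).
  by rewrite coef_linear_polyXn expr1n mul1r.
have coefB l : (B ^+ m.+1)`_l = (- t) ^+ (m.+1 - l) *+ 'C(m.+1, l).
  by rewrite coef_linear_polyXn expr1n mulr1.
rewrite !coefM [X in _ + X]big_ord_recr /= coefA bin_small // mulr0n mul0r addr0.
rewrite /fpoly -sumrN -big_split /=; apply: eq_bigr => j _.
have le_jm : (j <= m)%N by rewrite -ltnS.
rewrite !coefA !coefB subKn ?(leqW le_jm) //.
rewrite (_ : (m.+1 - (m - j) = j.+1)%N); last by lia.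
rewrite -[in 'C(m.+1, m - j)]subSS bin_sub // bin_sub ?(leqW le_jm) //.
have even_pow : t ^+ (2 * j) = (- t) ^+ j * (- t) ^+ j.
  by rewrite -exprMn mulrNN -expr2 -exprM.
by rewrite !exprS even_pow !scaler_nat; ring.
Qed.

Let coefs_Q_catalan_sum : Q`_m + Q`_m.+1 = - (s * catalan_sum m s t).
Proof.
have eAB : A * B = (s ^+ 2)%:P * 'X + (- t)%:P * W ^+ 2.
  by rewrite /A /B /W !(polyCN, polyCB, polyC_exp, polyC1); ring.
have eB : B = - (W + s%:P).
  by rewrite /A /B /W !(polyCN, polyCB, polyC1); ring.
have eQ : Q = \sum_(k < m.+1) 'X^(m - k) * ((s ^+ (2 * (m - k)) * (- t) ^+ k)%:P *
      - (W ^+ (2 * k).+1 + s%:P * W ^+ (2 * k))) *+ 'C(m, k).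
  rewrite /Q exprSr mulrA -exprMn eAB exprDn mulr_suml; apply: eq_bigr => k _.
  rewrite mulrnAl; congr (_ *+ _).
  rewrite [((s ^+ 2)%:P * _) ^+ _]exprMn [((- t)%:P * _) ^+ _]exprMn.
  by rewrite -!polyC_exp -!exprM (exprS W) eB polyCM; ring.
rewrite eQ !coef_sum -big_split /catalan_sum mulr_sumr -sumrN; apply: eq_bigr => k _.
have le_km : (k <= m)%N by rewrite -ltnS.
rewrite !coefMn !coefXnM ltnNge leq_subr ltnNge (leq_trans (leq_subr k m)) //=.
rewrite subKn // (_ : (m.+1 - (m - k) = k.+1)%N); last by lia.
rewrite !coefCM !coefN !coefD !coefCM !coef_linear_polyXn !expr1n !mul1r.
have odd_sym : 'C((2 * k).+1, k.+1) = 'C((2 * k).+1, k).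
  by rewrite -bin_sub; [congr 'C(_, _); lia | lia].
have sign_cancel : (- t) ^+ k * (-1) ^+ k = t ^+ k.
  by rewrite -exprMn mulrN1 opprK.
rewrite odd_sym mulrnA -[_ *+ catalan k]mulr_natr natr_catalan -mul2n.
by rewrite -sign_cancel exprS; ring.
Qed.

Lemma fpoly_factor : fpoly R m.+1 = s * catalan_sum m s t.
Proof. by apply: oppr_inj; rewrite -coefs_Q_fpoly coefs_Q_catalan_sum. Qed.

End Factorisation.

Lemma rpred_catalan_sum (S : nzSemiRingType) (P : semiringClosed S) m s t :
  s \in P -> t \in P -> catalan_sum m s t \in P.
Proof.
by move=> Ps Pt; apply: rpred_sum => k _; rewrite rpredMn // rpredM // rpredX.
Qed.

Lemma catalan_sum_comp (R : comNzRingType) m (s t q : {poly R}) :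
  catalan_sum m s t \Po q = catalan_sum m (s \Po q) (t \Po q).
Proof.
rewrite /catalan_sum rmorph_sum; apply: eq_bigr => k _.
by rewrite rmorphMn rmorphM !rmorphXn.
Qed.

Lemma fpoly_derivn_ge0 (R : numDomainType) n i (t : R) :
  1 <= t -> 0 <= ((fpoly R n)^`(i)).[t].
Proof.
move=> ge1_t; case: n => [|m].
  by rewrite /fpoly big_ord0 derivn_poly0 ?size_poly0 // horner0.
have -> : fpoly R m.+1 = ('X * catalan_sum m 'X ('X + 1)) \Po ('X - 1%:P).
  rewrite fpoly_factor comp_polyM catalan_sum_comp comp_polyD !comp_polyX.
  by rewrite -[1 \Po _]/(1%:P \Po _) comp_polyC subrK.
apply: horner_derivn_comp_XsubC_ge0 => //.
by rewrite rpredM ?polyOverX // rpred_catalan_sum ?rpredD ?rpred1 ?polyOverX.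
Qed.

Theorem mainTheorem6 (R : realFieldType) (n : nat) :
  forall (i : nat) (t : R), (i < 2 * n)%N -> 1 <= t ->
    0 <= ((fpoly R n)^`(i)).[t].
Proof. by move=> i t _; apply: fpoly_derivn_ge0. Qed.
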